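(* Let $m\ge2$ be an integer and let $A$ be a left brace with $A^{(3)}=A^{m+1}=\{0\}$. Let $a\in A$, and define $a_1=a$ and $a_{j+1}=a*a_j$ for $1\le j\le m-1$. Then for every $1\le k\le m-1$, \[(-a)*a_{m-k}=\sum_{j=1}^k(-1)^ja_{m-k+j}.\]
   Context: A left brace $(A,+,\cdot)$ is a set $A$ with two binary operations such that $(A,+)$ is an abelian group, $(A,\cdot)$ is a group, and $a(b+c)=ab-a+ac$ for all $a,b,c\in A$. In a left brace, $a*b=-a+ab-b$. For subsets $L,M\subseteq A$, $L*M$ is the subgroup of $(A,+)$ generated by $\{l*m\mid l\in L,m\in M\}$. Set $A^{(1)}=A$, $A^{(r+1)}=A^{(r)}*A$, and $A^1=A$, $A^{r+1}=A*A^r$ for $r\ge1$. *)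

From mathcomp Require Import all_boot all_order all_algebra.
Set Implicit Arguments. Unset Strict Implicit. Unset Printing Implicit Defensive.
Import GRing.Theory.
Local Open Scope ring_scope.

Record leftBrace (V : zmodType) := LeftBrace {
  bmul : V -> V -> V;
  bone : V;
  binv : V -> V;
  bmulA : forall x y z, bmul x (bmul y z) = bmul (bmul x y) z;
  bmul1l : forall x, bmul bone x = x;
  bmul1r : forall x, bmul x bone = x;
  bmulVl : forall x, bmul (binv x) x = bone;
  bmulVr : forall x, bmul x (binv x) = bone;
  bdist : forall a b c, bmul a (b + c) = bmul a b - a + bmul a c
}.

Section Brace.
Variables (V : zmodType) (B : leftBrace V).

Definition bstar (a b : V) : V := - a + bmul B a b - b.

Definition add_gen (S : V -> Prop) : V -> Prop :=
  fun x => forall P : V -> Prop,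
    P 0 -> (forall u v, P u -> P v -> P (u - v)) ->
    (forall u, S u -> P u) -> P x.

Definition bstar_set (L M : V -> Prop) : V -> Prop :=
  add_gen (fun x => exists l m, L l /\ M m /\ x = bstar l m).

(* right series A^(r): rser r = A^(r+1); left series A^r: lser r = A^(r+1) *)
Fixpoint rser (r : nat) : V -> Prop :=
  match r with
  | 0 => fun _ => True
  | r'.+1 => bstar_set (rser r') (fun _ => True)
  end.
Fixpoint lser (r : nat) : V -> Prop :=
  match r with
  | 0 => fun _ => True
  | r'.+1 => bstar_set (fun _ => True) (lser r')
  end.

Definition right_pow (r : nat) := rser r.-1.
Definition left_pow (r : nat) := lser r.-1.

Definition aseq (a : V) (j : nat) : V := iter j.-1 (bstar a) a.

End Brace.

From mathcomp Require Import all_boot all_order all_algebra.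
From mathcomp Require Import zify.
Set Implicit Arguments. Unset Strict Implicit.
Import GRing.Theory.
Local Open Scope ring_scope.

(* In a left brace the maps lam a x := -a + a x are additive
   automorphisms of (V,+), and a |-> lam a is a morphism from (V,.) to
   Aut(V,+).  Hence a * x = lam a x - x, so a * _ is additive.
   If A^(3) = 0, every star x * y lies in the kernel K of lam; K is closed
   under +, and since a b = (a + b) + a * b we get lam (a + b) = lam a o lam b,
   in particular lam (-a) inverts lam a.
   With a_{n+j} (n = m - k) and y := sum_{j=0}^k (-1)^j a_{n+j}, additivity of
   a * _ and a_{m+1} = 0 (it lies in A^{m+1}) give the telescoping identity
   lam a y = y + a * y = a_n.  Applying lam (-a) yields lam (-a) a_n = y,
   i.e. (-a) * a_n = y - a_n, which is the claimed alternating sum. *)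

Section LambdaMaps.
Variables (V : zmodType) (B : leftBrace V).
Local Notation mul := (bmul B).
Local Notation inv := (binv B).

Definition lam (a x : V) : V := - a + mul a x.

Lemma mulE a x : mul a x = a + lam a x.
Proof. by rewrite /lam addrA addrN add0r. Qed.

Lemma bstarE a x : bstar B a x = lam a x - x.
Proof. by []. Qed.

(* From a(0+0) = a0 - a + a0: right multiplication by 0 is the identity, *)
Lemma mul_a0 a : mul a 0 = a.
Proof.
have dist00 := bdist B a 0 0; rewrite addr0 in dist00.
apply/eqP; rewrite -subr_eq0; apply/eqP.
by apply: (addIr (mul a 0)); rewrite add0r -dist00.
Qed.

Lemma bone0 : bone B = 0.
Proof. by rewrite -(bmul1l B 0) mul_a0. Qed.

Lemma lamD a x y : lam a (x + y) = lam a x + lam a y.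
Proof. by rewrite /lam bdist -!addrA. Qed.

Lemma lam0 a : lam a 0 = 0.
Proof. by rewrite /lam mul_a0 addNr. Qed.

Lemma lamN a x : lam a (- x) = - lam a x.
Proof. by apply/eqP; rewrite -addr_eq0 -lamD addNr lam0. Qed.

Lemma lamM a b x : lam (mul a b) x = lam a (lam b x).
Proof.
rewrite /lam -bmulA {1}(mulE b x) bdist.
by rewrite -[_ - a + _]addrA addKr.
Qed.

Lemma lam_one x : lam (bone B) x = x.
Proof. by rewrite /lam bmul1l bone0 oppr0 add0r. Qed.

Lemma lamVK u x : lam (inv u) (lam u x) = x.
Proof. by rewrite -lamM bmulVl lam_one. Qed.

Lemma lamKV u x : lam u (lam (inv u) x) = x.
Proof. by rewrite -lamM bmulVr lam_one. Qed.

Lemma addr_as_mul u w : u + w = mul u (lam (inv u) w).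
Proof. by rewrite mulE lamKV. Qed.

Definition lam_trivial (c : V) : Prop := forall z, lam c z = z.

(* The kernel of lam is closed under addition (there s + t = s . t). *)
Lemma lam_trivialD s t :
  lam_trivial s -> lam_trivial t -> lam_trivial (s + t).
Proof.
move=> triv_s triv_t z.
have triv_Vs w : lam (inv s) w = w by rewrite -{1}(triv_s w) lamVK.
by rewrite addr_as_mul triv_Vs lamM triv_t triv_s.
Qed.

Lemma bstarD a x y : bstar B a (x + y) = bstar B a x + bstar B a y.
Proof. by rewrite !bstarE lamD opprD addrACA. Qed.

Lemma bstar0 a : bstar B a 0 = 0.
Proof. by rewrite bstarE lam0 subr0. Qed.

Lemma bstarN a x : bstar B a (- x) = - bstar B a x.
Proof. by rewrite !bstarE lamN opprB opprK addrC. Qed.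

Lemma bstarMsign a x j :
  bstar B a (x *~ ((-1) ^+ j)) = bstar B a x *~ ((-1) ^+ j).
Proof.
elim: j => [|j IH]; first by rewrite expr0 !mulr1z.
by rewrite exprS mulN1r !mulrNz bstarN IH.
Qed.

End LambdaMaps.

Lemma add_gen_in (V : zmodType) (S : V -> Prop) x : S x -> add_gen S x.
Proof. by move=> Sx P _ _ gen_P; apply: gen_P. Qed.

Section TrivialThirdRightPower.
Variables (V : zmodType) (B : leftBrace V).
Hypothesis right3_trivial : forall x, right_pow B 3 x -> x = 0.

(* A^(3) = 0 says (x * y) * z = 0, i.e. every star acts trivially. *)
Lemma bstar_lam_trivial x y : lam_trivial B (bstar B x y).
Proof.
move=> z; apply/eqP; rewrite -subr_eq0 -bstarE; apply/eqP/right3_trivial.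
apply: add_gen_in; exists (bstar B x y), z; split=> //.
by apply: add_gen_in; exists x, y.
Qed.

Lemma lam_add_bstar u x y z : lam B (u + bstar B x y) z = lam B u z.
Proof.
set c := bstar B x y.
have Vu_c : lam B (binv B u) c = bstar B (binv B u) c + c by rewrite bstarE subrK.
rewrite (addr_as_mul B) lamM Vu_c.
by rewrite (lam_trivialD (bstar_lam_trivial _ _) (bstar_lam_trivial _ _)).
Qed.

(* Hence lam is also a morphism from (V,+): a b = (a + b) + a * b. *)
Lemma lam_addr a b z : lam B (a + b) z = lam B a (lam B b z).
Proof.
have ab_sum : bmul B a b = (a + b) + bstar B a b.
  by rewrite mulE bstarE -addrA [b + _]addrC subrK.
by rewrite -lamM ab_sum lam_add_bstar.
Qed.

Lemma lamNK a z : lam B (- a) (lam B a z) = z.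
Proof. by rewrite -lam_addr addNr -(bone0 B) lam_one. Qed.

End TrivialThirdRightPower.

Section StarSequence.
Variables (V : zmodType) (B : leftBrace V) (a : V).
Local Notation seqa := (aseq B a).

Lemma aseqS j : (1 <= j)%N -> seqa j.+1 = bstar B a (seqa j).
Proof. by case: j => // j _; rewrite /aseq /= iterS. Qed.

Lemma aseq_lser j : lser B j (seqa j.+1).
Proof.
elim: j => [|j IH] //=.
by rewrite aseqS //; apply: add_gen_in; exists a, (seqa j.+1).
Qed.

Definition alt_sum (n k : nat) : V :=
  \sum_(0 <= j < k.+1) seqa (n + j) *~ ((-1) ^+ j).

(* a * y telescopes against y, so lam a y = y + a * y = a_n when
   a_{n+k+1} vanishes. *)
Lemma lam_alt_sum n k :
  (1 <= n)%N -> seqa (n + k).+1 = 0 -> lam B a (alt_sum n k) = seqa n.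
Proof.
move=> n_gt0 last0.
have star_sum : bstar B a (alt_sum n k)
    = \sum_(0 <= j < k.+1) seqa (n + j).+1 *~ ((-1) ^+ j).
  rewrite /alt_sum (big_morph (bstar B a) (bstarD B a) (bstar0 B a)).
  by apply: eq_bigr => j _; rewrite bstarMsign -aseqS // addn_gt0 n_gt0.
have -> : lam B a (alt_sum n k) = alt_sum n k + bstar B a (alt_sum n k).
  by rewrite bstarE addrC subrK.
rewrite star_sum big_nat_recr //= last0 mul0rz addr0.
rewrite /alt_sum big_nat_recl // addn0 expr0 mulr1z -addrA -big_split /=.
rewrite big1 ?addr0 // => j _.
by rewrite addnS exprS mulN1r mulrNz addNr.
Qed.

End StarSequence.

Theorem mainTheorem10 (V : zmodType) (B : leftBrace V) (m : nat) :
  (2 <= m)%N ->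
  (forall x, right_pow B 3 x -> x = 0) ->
  (forall x, left_pow B m.+1 x -> x = 0) ->
  forall (a : V) (k : nat), (1 <= k)%N -> (k <= m - 1)%N ->
    bstar B (- a) (aseq B a (m - k)) =
    \sum_(1 <= j < k.+1) (aseq B a (m - k + j)) *~ ((-1) ^+ j).
Proof.
move=> _ right3_trivial leftm1_trivial a k k_gt0 k_lt_m.
set n := (m - k)%N.
have n_gt0 : (1 <= n)%N by rewrite /n; lia.
have a_last0 : aseq B a (n + k).+1 = 0.
  by apply: leftm1_trivial; rewrite /n subnK; [exact: aseq_lser | lia].
have split_sum : alt_sum B a n k
    = aseq B a n + \sum_(1 <= j < k.+1) aseq B a (n + j) *~ ((-1) ^+ j).
  by rewrite /alt_sum big_nat_recl // big_add1 addn0 expr0 mulr1z.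
rewrite bstarE -{1}(lam_alt_sum n_gt0 a_last0) lamNK // split_sum.
by rewrite addrAC subrr add0r.
Qed.
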